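(* Let $F$ be a finite extension of $\mathbb{Q}_p$, $G$ a finite abelian group of odd order, and $h\in\mathrm{Hom}(\Omega_F,G)$ wildly and weakly ramified with $[F^h:F]=p$. Put $L=F^h$, let $\tau$ generate $\mathrm{Gal}(L/F)$, let $\zeta$ be a primitive $p$-th root of unity, let $\alpha'\in A^h$ with $A^h=\mathcal{O}_F\mathrm{Gal}(L/F)\cdot\alpha'$, and $y_i=\sum_{k\in\mathbb{F}_p}\tau^k(\alpha')\zeta^{-ik}$ for $i\in\mathbb F_p$. Let $n$ be the divisor of $p-1$ such that the image of $\mathrm{Gal}(F(\zeta)/F)$ in $\mathbb F_p^\times$ (via $\omega(\zeta)=\zeta^{i}$) equals $R_n$. Then \[ \alpha:=\frac{1}{p}\sum_{k\in\mathbb{F}_p}\prod_{i\in R_n}y_i^{c(i^{-1}k)} \] lies in $L$.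
   Context: $F^h$ is the fixed field of $\ker h$ in $F^c$; wildly/weakly ramified refer to $F^h/F$ being wildly ramified / having trivial second lower ramification group. $A^h$ is the square root of the inverse different of $L/F$. $R_n=(\mathbb F_p^\times)^n$. For $i\in\mathbb F_p^\times$, $i^{-1}$ is its inverse in $\mathbb F_p^\times$, and for $i\in\mathbb F_p$, $c(i)$ is the unique integer in $[\frac{1-p}{2},\frac{p-1}{2}]$ representing $i$ ($p$ is odd here). $\zeta^{j}$ for $j\in\mathbb F_p$ means $\zeta^m$ for any integer $m$ representing $j$. *)

From HB Require Import structures.
From mathcomp Require Import all_boot all_order all_algebra all_fingroup all_solvable all_field.
Set Implicit Arguments. Unset Strict Implicit. Unset Printing Implicit Defensive.
Import Order.TTheory GRing.Theory Num.Theory.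
Local Open Scope ring_scope.

(* A normalized discrete valuation on the elements of D (a subset of a field R)
   closed under the field operations; the value at 0 is irrelevant (all
   statements are guarded by nonzeroness). *)
Definition normalized_dvaluation (R : fieldType) (D : {pred R}) (v : R -> int) :=
  [/\ (forall x y, x \in D -> y \in D -> x != 0 -> y != 0 -> v (x * y) = v x + v y),
      (forall x y, x \in D -> y \in D -> x != 0 -> y != 0 -> x + y != 0 ->
          Num.min (v x) (v y) <= v (x + y))
    & (forall m : int, exists2 x, x \in D & x != 0 /\ v x = m)].

Definition vclose (R : fieldType) (v : R -> int) (N : int) (x y : R) :=
  x = y \/ N <= v (x - y).

(* These are exactly (up to
   isomorphism) the finite extensions of Q_p with their normalized valuation. *)
Definition padic_local_field (p : nat) (F : fieldType) (v : F -> int) :=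
  [/\ [/\ prime p, [pchar F] =i pred0 & normalized_dvaluation predT v],
      0 < v p%:R,
      (forall u : nat -> F,
         (forall N : int, exists m, forall i j, (m <= i)%N -> (m <= j)%N ->
             vclose v N (u i) (u j)) ->
         exists l, forall N : int, exists m, forall i, (m <= i)%N -> vclose v N (u i) l)
    & (* finite residue field *)
      (exists s : seq F, forall x, x != 0 -> 0 <= v x ->
          exists2 r, r \in s & vclose v 1 x r)].

Definition crep (p : nat) (i : 'F_p) : int :=
  if (val i <= (p - 1) %/ 2)%N then (val i)%:Z else (val i)%:Z - p%:Z.

Definition Rn (p n : nat) : pred 'F_p :=
  fun i => (i != 0) && [exists x : 'F_p, (x != 0) && (i == x ^+ n)].

Definition extends_valuation (F : fieldType) (E : fieldExtType F) (L : {vspace E})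
    (v : F -> int) (vL : E -> int) (e : nat) :=
  [/\ (0 < e)%N, normalized_dvaluation (mem L) vL
    & forall c : F, c != 0 -> vL (c%:A) = e%:Z * v c].

Definition in_lower_ram_group (F : fieldType) (E : splittingFieldType F)
    (L : {vspace E}) (vL : E -> int) (sigma : gal_of L) (i : nat) :=
  forall x, x \in L -> x != 0 -> 0 <= vL x -> vclose vL (i.+1)%:Z (sigma x) x.

Definition wildly_ramified (p e : nat) := (p %| e)%N.

Definition weakly_ramified (F : fieldType) (E : splittingFieldType F)
    (L : {subfield E}) (vL : E -> int) :=
  forall sigma, sigma \in 'Gal(L / 1%VS)%g ->
    in_lower_ram_group vL sigma 2 -> sigma = 1%g.

Definition in_inv_different (F : fieldType) (E : splittingFieldType F)
    (L : {subfield E}) (vL : E -> int) (x : E) :=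
  x \in L /\ forall y, y \in L -> y != 0 -> 0 <= vL y ->
    let t := galTrace 1%VS L (x * y) in t = 0 \/ 0 <= vL t.

Definition in_frac_ideal (F : fieldType) (E : fieldExtType F) (L : {vspace E})
    (vL : E -> int) (a : int) (x : E) :=
  x \in L /\ (x = 0 \/ a <= vL x).

Arguments Rn : clear implicits.
Arguments crep : clear implicits.

From HB Require Import structures.
From mathcomp Require Import all_boot all_order all_algebra all_fingroup all_solvable all_field.
Set Implicit Arguments. Unset Strict Implicit. Unset Printing Implicit Defensive.
Import Order.TTheory GRing.Theory Num.Theory.
Local Open Scope ring_scope.

(* By Galois theory it suffices that alpha is fixed by every s in Gal(E/L).
   Such an s fixes the conjugates tau^k(alpha') and sends zeta to zeta^j for
   some j in R_n, hence sends y_i to y_(j i).  Reindexing both i and k by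
   multiplication with j leaves the products unchanged, since R_n is stable
   under multiplication by j and (j i)^-1 (j k) = i^-1 k.  Only characteristic 0,
   alpha' \in L, the primitivity of zeta and the description of the image of
   Gal(F(zeta)/F) are needed. *)

Section PrimeRootPowers.

Variables (p : nat) (R : nzRingType) (z : R).
Hypotheses (p_pr : prime p) (z_p : z ^+ p = 1).

Lemma expr_Fp_nat (m : nat) : z ^+ val (m%:R : 'F_p) = z ^+ m.
Proof. by rewrite /= val_Fp_nat // expr_mod. Qed.

Lemma expr_FpM (x y : 'F_p) : z ^+ val (x * y) = (z ^+ val x) ^+ val y.
Proof.
have -> : x * y = (val x * val y)%:R by rewrite natrM !natr_Zp.
by rewrite expr_Fp_nat exprM.
Qed.

End PrimeRootPowers.

Lemma Rn_mull (p n : nat) (j i : 'F_p) : Rn p n j -> Rn p n (j * i) = Rn p n i.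
Proof.
move=> /andP[jnz /existsP[x /andP[xnz /eqP jx]]].
apply/andP/andP => [[ji /existsP[w /andP[wnz /eqP Dw]]]|[inz /existsP[w /andP[wnz /eqP Dw]]]].
  split; first by move: ji; rewrite mulf_eq0 negb_or => /andP[].
  apply/existsP; exists (x^-1 * w); rewrite mulf_neq0 ?invr_eq0 //=.
  by rewrite exprMn -Dw exprVn -jx mulKf.
split; first by rewrite mulf_neq0.
by apply/existsP; exists (x * w); rewrite mulf_neq0 //= exprMn -Dw -jx.
Qed.

Lemma galois_full_pchar0 (F : fieldType) (E : splittingFieldType F) (K : {subfield E}) :
  [pchar F] =i pred0 -> galois K {:E}.
Proof.
move=> F0; rewrite /galois subvf normalFieldf andbT.
apply/separableP => x _; apply/negPn/negP => /separablePn_pchar [q qch _].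
by move: (F0 q); rewrite -(pchar_lalg E) qch.
Qed.

Lemma gal_prim_root_exponent (F : fieldType) (E : splittingFieldType F) (p : nat)
    (zeta : E) (s : gal_of {:E}) :
  prime p -> p.-primitive_root zeta ->
  exists2 j : 'F_p, j != 0 &
    s zeta = zeta ^+ val j /\
    exists2 w, w \in 'Gal(<<1%VS; zeta>>%VS / 1%VS)%g & w zeta = zeta ^+ val j.
Proof.
move=> p_pr zeta_p; have z_p : zeta ^+ p = 1 by apply: prim_expr_order.
have [k k_cop s_zeta] := aut_prim_rootP s zeta_p.
exists (k%:R : 'F_p).
  apply: contraL k_cop => /eqP/(congr1 val); rewrite /= val_Fp_nat // => /eqP p_k.
  by rewrite coprime_sym prime_coprime // negbK.
rewrite expr_Fp_nat //; split=> //.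
have sQzeta : kAut 1 <<1; zeta>>%AS s.
  rewrite kAut1E aimg_adjoin aimg1; apply/FadjoinP; split; first exact: sub1v.
  by rewrite s_zeta rpredX // memv_adjoin.
have [w wG Dw] := kAut_to_gal sQzeta.
by exists w; rewrite // -Dw ?memv_adjoin.
Qed.

Lemma rmorph_resolvent (p : nat) (R : nzRingType) (f : {rmorphism R -> R})
    (u : 'F_p -> R) (z : R) (j i : 'F_p) :
  prime p -> z ^+ p = 1 -> (forall k, f (u k) = u k) -> f z = z ^+ val j ->
  f (\sum_k u k * z ^+ val (- (i * k))) = \sum_k u k * z ^+ val (- ((j * i) * k)).
Proof.
move=> p_pr z_p fu fz; rewrite rmorph_sum; apply: eq_bigr => k _.
by rewrite rmorphM rmorphXn fu fz -expr_FpM // mulrN mulrA.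
Qed.

Lemma rmorph_Rn_twisted_sum (p n : nat) (K : fieldType) (f : {rmorphism K -> K})
    (y : 'F_p -> K) (c : 'F_p -> int) (j : 'F_p) :
  Rn p n j -> (forall i, f (y i) = y (j * i)) ->
  let t := p%:R^-1 * \sum_k \prod_(i | Rn p n i) y i ^ c (i^-1 * k) in f t = t.
Proof.
move=> Rnj fy; have jnz : j != 0 by case/andP: Rnj.
rewrite /= rmorphM fmorphV rmorph_nat rmorph_sum; congr (_ * _).
rewrite [RHS](reindex_inj (mulfI jnz)); apply: eq_bigr => k _.
rewrite rmorph_prod [RHS](reindex_inj (mulfI jnz)) /=.
rewrite [RHS](eq_bigl (Rn p n)) => [|i]; last exact: Rn_mull.
apply: eq_bigr => i _; rewrite fmorphXz fy.
by rewrite invfM [j^-1 * _]mulrC -mulrA mulKf.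
Qed.

Theorem lemma5p6
  (p : nat) (F : fieldType) (v : F -> int)
  (HF : padic_local_field p v)
  (* ambient finite normal extension of F containing L and zeta *)
  (E : splittingFieldType F)
  (L : {subfield E}) (vL : E -> int) (e : nat)
  (HvL : extends_valuation L v vL e)
  (HLgal : galois 1%VS L) (HLdeg : \dim L = p)
  (* h : Omega_F -> G with F^h = L, recorded as the induced embedding
     Gal(L/F) = Omega_F / ker h  >->  G *)
  (gT : finGroupType) (G : {group gT})
  (HGab : abelian G) (HGodd : odd #|G|)
  (h : {morphism 'Gal(L / 1%VS)%g >-> gT})
  (Hhinj : ('injm h)%g) (HhG : (h @* 'Gal(L / 1%VS) \subset G)%g)
  (Hwild : wildly_ramified p e) (Hweak : weakly_ramified L vL)
  (tau : gal_of L) (Htau : 'Gal(L / 1%VS)%g = <[tau]>%g)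
  (zeta : E) (Hzeta : p.-primitive_root zeta)
  (* A^h = P_L^a is the square root of the inverse different P_L^(2a) *)
  (a : int)
  (HAh : forall x, in_inv_different L vL x <-> in_frac_ideal L vL (2%:Z * a) x)
  (alpha' : E) (Halpha'L : alpha' \in L)
  (Hgen : forall x, in_frac_ideal L vL a x <->
     exists c : 'I_p -> F, (forall k, c k = 0 \/ 0 <= v (c k)) /\
       x = \sum_(k < p) c k *: (tau ^+ k)%g alpha')
  (n : nat) (Hn : (n %| p.-1)%N)
  (HRn : forall i : 'F_p, i != 0 ->
     ((exists2 w, w \in 'Gal(<<1%VS; zeta>>%VS / 1%VS)%g & w zeta = zeta ^+ val i)
      <-> Rn p n i)) :
  let y (i : 'F_p) : E :=
    \sum_(k : 'F_p) (tau ^+ val k)%g alpha' * zeta ^+ val (- (i * k)) in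
  let alpha : E :=
    p%:R^-1 * \sum_(k : 'F_p) \prod_(i : 'F_p | Rn p n i) y i ^ crep p (i^-1 * k) in
  alpha \in L.
Proof.
cbv zeta; case: HF => [[p_pr F0 _] _ _ _].
set alpha := (_ * _).
have /galois_fixedField <- := galois_full_pchar0 L F0.
apply/fixedFieldP; first exact: memvf.
move=> s sG; have z_p : zeta ^+ p = 1 by apply: prim_expr_order.
have [j jnz [s_zeta Qzeta_j]] := gal_prim_root_exponent s p_pr Hzeta.
apply: rmorph_Rn_twisted_sum => [|i]; first exact: (HRn j jnz).1 Qzeta_j.
apply: rmorph_resolvent => // k.
exact: fixed_gal (subvf L) sG (memv_gal _ Halpha'L).
Qed.
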